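(* Let $\alpha$ be a divergence, $E$ and $F$ Polish spaces, and $\mu,\nu\in\mathcal P(E)$ with $\nu\ll\mu$. Suppose a measurable map $T:E\to F$ is sufficient for $\{\mu,\nu\}$, meaning that $d\nu/d\mu$ (has a version that) is $\sigma(T)$-measurable. Then $\alpha(\nu\circ T^{-1}\,|\,\mu\circ T^{-1})=\alpha(\nu|\mu)$. In particular this holds if $T$ is a bijection with measurable inverse.
   Context: For a Polish space $E$, $\mathcal P(E)$ is the set of Borel probability measures on $E$. A kernel from $E$ to $F$ is a measurable map $E\ni x\mapsto K_x\in\mathcal P(F)$, and $\mu K:=\int_E\mu(dx)K_x(\cdot)\in\mathcal P(F)$. A divergence is a family of functions $\mathcal P(E)\ni\nu\mapsto\alpha(\nu|\mu)\in[0,\infty]$, one for each Polish space $E$ and each $\mu\in\mathcal P(E)$, each convex and lower semicontinuous with respect to total variation, such that: (1) $\alpha(\mu|\mu)=0$; (2) $\alpha(\nu|\mu)=\infty$ if $\nu$ is not absolutely continuous with respect to $\mu$; (3) $\alpha(\nu K|\mu K)\le\alpha(\nu|\mu)$ for all Polish $E,F$, all $\mu,\nu\in\mathcal P(E)$ and every kernel $K$ from $E$ to $F$. *)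

From HB Require Import structures.
From mathcomp Require Import all_boot all_order all_algebra.
From mathcomp Require Import all_classical all_reals all_analysis.
From mathcomp Require Import measurable_realfun.

Set Implicit Arguments.
Unset Strict Implicit.
Unset Printing Implicit Defensive.

Import Order.TTheory GRing.Theory Num.Theory.
Local Open Scope classical_set_scope.
Local Open Scope ring_scope.

Definition is_polish {R : realType} {d : measure_display} (T : measurableType d) : Prop :=
  exists dist : T -> T -> R,
    [/\ (forall x y, 0 <= dist x y) /\ (forall x y, dist x y = 0 <-> x = y),
        (forall x y, dist x y = dist y x) /\
        (forall x y z, dist x z <= dist x y + dist y z),
        (forall u : nat -> T,
            (forall e : R, 0 < e -> exists N, forall m n, (N <= m)%N -> (N <= n)%N ->
                dist (u m) (u n) < e) ->
            exists l, forall e : R, 0 < e -> exists N, forall n, (N <= n)%N ->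
                dist (u n) l < e),
        (exists D : set T, countable D /\
            forall x (e : R), 0 < e -> exists2 y, D y & dist x y < e) &
        (@measurable d T =
           <<s [set U : set T | forall x, U x ->
                  exists2 e : R, 0 < e & [set y | dist x y < e] `<=` U] >>)].

Local Open Scope ereal_scope.

(* The type of a candidate divergence: one function P(E) x P(E) -> [0, oo]
   for every measurable space E; only its values on Polish spaces matter.
   [alpha nu mu] stands for alpha(nu | mu). *)
Definition divergence_fun (R : realType) :=
  forall (d : measure_display) (T : measurableType d),
    probability T R -> probability T R -> \bar R.

Definition is_comp_kernel {R : realType} {d d' : measure_display}
  {E : measurableType d} {F : measurableType d'}
  (mu : probability E R) (K : R.-pker E ~> F) (rho : probability F R) : Prop :=
  forall B, measurable B -> rho B = \int[mu]_x K x B.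

Definition is_image_measure {R : realType} {d d' : measure_display}
  {E : measurableType d} {F : measurableType d'}
  (mu : probability E R) (T : E -> F) (rho : probability F R) : Prop :=
  forall B, measurable B -> rho B = mu (T @^-1` B).

Definition is_divergence {R : realType} (alpha : divergence_fun R) : Prop :=
  (forall d (E : measurableType d), @is_polish R d E -> forall (mu : probability E R),
    [/\
        (forall nu : probability E R, 0 <= alpha d E nu mu),
        (forall (t : R) (nu1 nu2 nu : probability E R), (0 <= t <= 1)%R ->
           (forall A, measurable A -> nu A = t%:E * nu1 A + (1 - t)%:E * nu2 A) ->
           alpha d E nu mu <= t%:E * alpha d E nu1 mu + (1 - t)%:E * alpha d E nu2 mu),
        (forall (nu : probability E R) (a : R), a%:E < alpha d E nu mu ->
           exists2 delta : R, (0 < delta)%R & forall nu' : probability E R,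
             (forall A, measurable A -> `|nu' A - nu A| < delta%:E) ->
             a%:E < alpha d E nu' mu),
        alpha d E mu mu = 0 &
        (forall nu : probability E R, ~ (nu `<< mu) -> alpha d E nu mu = +oo)]) /\
  (forall d d' (E : measurableType d) (F : measurableType d'),
     @is_polish R d E -> @is_polish R d' F ->
     forall (mu nu : probability E R) (K : R.-pker E ~> F)
            (muK nuK : probability F R),
     is_comp_kernel mu K muK -> is_comp_kernel nu K nuK ->
     alpha d' F nuK muK <= alpha d E nu mu).

Definition sufficient {R : realType} {d d' : measure_display}
  {E : measurableType d} {F : measurableType d'}
  (T : E -> F) (mu nu : probability E R) : Prop :=
  exists g : E -> \bar R,
    [/\ (forall x, 0 <= g x),
        (forall B : set (\bar R), measurable B ->
           exists2 C : set F, measurable C & g @^-1` B = T @^-1` C) &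
        (forall A, measurable A -> nu A = \int[mu]_(x in A) g x)].

From HB Require Import structures.
From mathcomp Require Import all_boot all_order all_algebra.
From mathcomp Require Import all_classical all_reals all_analysis.
From mathcomp Require Import measurable_realfun.
From mathcomp Require Import lra.
Set Implicit Arguments.
Unset Strict Implicit.
Unset Printing Implicit Defensive.
Import Order.TTheory GRing.Theory Num.Theory.
Local Open Scope classical_set_scope.
Local Open Scope ring_scope.
Local Open Scope ereal_scope.

(* Applying the data processing inequality to the deterministic kernel of T
   gives alpha(nu T^-1 | mu T^-1) <= alpha(nu | mu). For the converse, cut E
   into the finitely many level sets P_k of the density g = dnu/dmu (steps of
   width eps, plus the tail g >= N eps). Sufficiency makes each P_k a preimage
   T^-1(D_k), with the D_k partitioning F, and the kernel sending D_k to
   mu(. | P_k) maps mu T^-1 back to mu exactly, while it maps nu T^-1 to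
   sum_k nu(P_k) mu(. | P_k), which lies within eps + nu(g >= N eps) of nu in
   total variation. Data processing for this kernel together with the lower
   semicontinuity of alpha(. | mu) yields the reverse inequality. In the
   bijective case, data processing is applied to the inverse map instead. *)

Lemma measurable_preimageT d d' (X : measurableType d) (Y : measurableType d')
    (f : X -> Y) B : measurable_fun [set: X] f -> measurable B ->
  measurable (f @^-1` B).
Proof. by move=> mf mB; rewrite -[A in measurable A]setTI; exact: mf. Qed.

Lemma probability_fineE d (X : measurableType d) (R : realType)
    (P : probability X R) A : measurable A -> P A = (fine (P A))%:E.
Proof. by move=> mA; rewrite fineK // fin_num_measure. Qed.

Lemma find_iotaP (p : pred nat) n k : find p (iota 0 n) = k <->
  [/\ (k <= n)%N, forall j, (j < k)%N -> ~~ p j & (k < n)%N -> p k].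
Proof.
have find_le : (find p (iota 0 n) <= n)%N by rewrite -[leqRHS](size_iota 0 n) find_size.
split=> [<-|[kn before hit]].
  split=> // [j jk|fn].
    by have := before_find 0%N jk; rewrite nth_iota ?(leq_trans jk find_le) // => ->.
  have hasp : has p (iota 0 n) by rewrite has_find size_iota.
  by have := nth_find 0%N hasp; rewrite nth_iota.
case: (ltngtP (find p (iota 0 n)) k) => // [fk|kf].
  have hasp : has p (iota 0 n) by rewrite has_find size_iota (leq_trans fk kn).
  by have := nth_find 0%N hasp; rewrite nth_iota ?(leq_trans fk kn) // (negbTE (before _ fk)).
have := before_find 0%N kf; rewrite nth_iota ?(leq_trans kf find_le) //.
by rewrite hit // (leq_trans kf find_le).
Qed.

Record finpart d (X : measurableType d) := FinPart {
  ncells : nat;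
  cell_of : X -> nat;
  cell_of_lt : forall x, (cell_of x < ncells)%N;
  measurable_cell : forall k, measurable (cell_of @^-1` [set k]) }.

Definition cell d (X : measurableType d) (pi : finpart X) k :=
  cell_of pi @^-1` [set k].

Section finpart_theory.
Context d (X : measurableType d) (R : realType) (pi : finpart X).

Lemma measure_cells_sum (m : {measure set X -> \bar R}) U : measurable U ->
  \sum_(k < ncells pi) m (U `&` cell pi k) = m U.
Proof.
move=> mU; rewrite -(measure_bigsetU m (F := fun k => U `&` cell pi k)).
- congr (m _); rewrite -(bigcup_mkord _ (fun k => U `&` cell pi k)).
  rewrite -setI_bigcupr setIidl // => x _.
  by exists (cell_of pi x) => //=; exact: cell_of_lt.
- by move=> k; apply: measurableI => //; exact: measurable_cell.
- apply/trivIsetP => i j _ _ ij; apply/seteqP; split => // x [[_ ei] [_ ej]].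
  by rewrite -ei -ej eqxx in ij.
Qed.

End finpart_theory.

Section step_kernel.
Context d d' (E : measurableType d) (F : measurableType d') (R : realType).
Variables (pi : finpart F) (Q : nat -> probability E R).

Definition step_kernel (y : F) : {measure set E -> \bar R} := Q (cell_of pi y).

Let measurable_cell_indic k :
  measurable_fun [set: F] (fun y => (\1_(cell pi k) y : R)%:E).
Proof. by apply/measurable_EFinP; apply: measurable_indic; exact: measurable_cell. Qed.

Lemma step_kernelE y U :
  step_kernel y U = \sum_(k < ncells pi) (\1_(cell pi k) y)%:E * Q k U.
Proof.
rewrite (bigD1 (Ordinal (cell_of_lt pi y))) //= indicE mem_set // mul1e.
rewrite big1 ?adde0 // => k /eqP yk; rewrite indicE memNset ?mul0e //= => ky.
by apply: yk; apply: val_inj.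
Qed.

Lemma measurable_step_kernel U : measurable U ->
  measurable_fun [set: F] (step_kernel ^~ U).
Proof.
move=> mU; rewrite (_ : step_kernel ^~ U = fun y => \sum_(k < ncells pi)
  (\1_(cell pi k) y)%:E * Q k U); last by apply/funext => y; exact: step_kernelE.
by apply: emeasurable_sum => k; exact: emeasurable_funM.
Qed.

HB.instance Definition _ :=
  isKernel.Build _ _ _ _ _ step_kernel measurable_step_kernel.

Lemma step_kernel_setT y : step_kernel y [set: E] = 1.
Proof. exact: probability_setT. Qed.

HB.instance Definition _ :=
  Kernel_isProbability.Build _ _ _ _ _ step_kernel step_kernel_setT.

Definition mixture (P : probability F R) : set E -> \bar R :=
  msum (fun k => mscale (NngNum (fine_ge0 (measure_ge0 P (cell pi k)))) (Q k))
    (ncells pi).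

HB.instance Definition _ P := Measure.on (mixture P).

Lemma mixtureE P U : mixture P U = \sum_(k < ncells pi) P (cell pi k) * Q k U.
Proof.
apply: eq_bigr => k _ /=.
by rewrite /mscale /= fineK // fin_num_measure //; exact: measurable_cell.
Qed.

Lemma mixture_setT P : mixture P [set: E] = 1.
Proof.
rewrite mixtureE; under eq_bigr do rewrite probability_setT mule1 -[cell _ _]setTI.
by rewrite measure_cells_sum //; exact: probability_setT.
Qed.

HB.instance Definition _ P :=
  Measure_isProbability.Build _ _ _ (mixture P) (mixture_setT P).

Lemma is_comp_kernel_step (P : probability F R) : is_comp_kernel P step_kernel (mixture P).
Proof.
move=> B mB; under eq_integral do rewrite step_kernelE.
rewrite -[LHS]/(mixture P B) mixtureE ge0_integral_sum //; last first.
- by move=> k y _; rewrite mule_ge0 // lee_fin.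
- by move=> k; exact: emeasurable_funM.
apply: eq_bigr => k _; under eq_integral do rewrite muleC.
by rewrite ge0_integralZl // integral_indic ?setIT 1?muleC //; exact: measurable_cell.
Qed.

End step_kernel.

Section conditioning.
Context d (E : measurableType d) (R : realType) (mu : probability E R).

(* Conditioning on a [mu]-null set returns [mu] itself. *)
Definition mcond (P : set E) (mP : measurable P) : probability E R :=
  mnormalize (mrestr mu mP) mu.

Lemma mcondE P (mP : measurable P) U : measurable U ->
  mu P * mcond mP U = mu (U `&` P).
Proof.
move=> mU; rewrite /mcond /= /mnormalize /= /mrestr /= setTI.
have fP : mu P \is a fin_num by rewrite fin_num_measure.
have fUP : mu (U `&` P) \is a fin_num by rewrite fin_num_measure //; exact: measurableI.
case: ifPn => [/orP[/eqP P0|/eqP Poo]|].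
- rewrite P0 mul0e; apply/esym/eqP; rewrite eq_le measure_ge0 andbT -P0.
  by apply: le_measure; rewrite ?inE //; exact: measurableI.
- by move: fP; rewrite Poo.
rewrite negb_or => /andP[P0 _]; rewrite -(fineK fP) -(fineK fUP) -!EFinM.
by rewrite mulrCA divff ?mulr1 // -eqe fineK.
Qed.

Lemma mcond_cells_sum (pi : finpart E) U : measurable U ->
  \sum_(k < ncells pi) mu (cell pi k) * mcond (measurable_cell pi k) U = mu U.
Proof.
move=> mU; rewrite -[RHS](measure_cells_sum pi mu mU).
by apply: eq_bigr => k _; rewrite mcondE.
Qed.

Lemma cell_error_le_mass (nu : probability E R) P (mP : measurable P) A :
  measurable A -> `|nu P * mcond mP A - nu (A `&` P)| <= nu P.
Proof.
move=> mA; have mAP := measurableI _ _ mA mP.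
have q1 := probability_le1 (mcond mP) mA.
have nuAP : nu (A `&` P) <= nu P by apply: le_measure; rewrite ?inE.
move: q1 nuAP; rewrite (probability_fineE nu mP) (probability_fineE nu mAP).
rewrite (probability_fineE (mcond mP) mA).
rewrite -!EFinM -EFinB abse_EFin !lee_fin => q1 wv.
have v0 : (0 <= fine (nu P))%R by rewrite fine_ge0.
have w0 : (0 <= fine (nu (A `&` P)))%R by rewrite fine_ge0.
have q0 : (0 <= fine (mcond mP A))%R by rewrite fine_ge0.
rewrite ler_norml; apply/andP; split; nra.
Qed.

End conditioning.

Section factored_partition.
Context d d' (E : measurableType d) (F : measurableType d') (R : realType).
Variables (T : E -> F) (piE : finpart E) (piF : finpart F).
Hypotheses (ncells_eq : ncells piF = ncells piE)
  (cell_of_comp : forall x, cell_of piF (T x) = cell_of piE x).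

Lemma preimage_cell k : T @^-1` cell piF k = cell piE k.
Proof. by apply/seteqP; split => x; rewrite /cell /preimage /= cell_of_comp. Qed.

Lemma mixture_image (Q : nat -> probability E R) (P : probability E R)
    (PT : probability F R) U : is_image_measure P T PT ->
  mixture piF Q PT U = \sum_(k < ncells piE) P (cell piE k) * Q k U.
Proof.
move=> PTE; rewrite mixtureE.
rewrite -(big_mkord xpredT (fun k => PT (cell piF k) * Q k U)) ncells_eq big_mkord.
by apply: eq_bigr => k _; rewrite PTE ?preimage_cell //; exact: measurable_cell.
Qed.

Lemma mixture_mcond_image (mu : probability E R) (muT : probability F R) U :
  is_image_measure mu T muT -> measurable U ->
  mu U = mixture piF (fun k => mcond mu (measurable_cell piE k)) muT U.
Proof. by move=> muTE mU; rewrite (mixture_image _ _ muTE) mcond_cells_sum. Qed.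

End factored_partition.

Section factorization.
Context d d' (E : measurableType d) (F : measurableType d') (T : E -> F).

Lemma finpart_factor (piE : finpart E) : (0 < ncells piE)%N ->
    (forall k, exists2 C, measurable C & cell piE k = T @^-1` C) ->
  exists piF : finpart F, ncells piF = ncells piE /\
    forall x, cell_of piF (T x) = cell_of piE x.
Proof.
move=> n_gt0 cellT.
have /choice[C CE] : forall k, exists C, measurable C /\ cell piE k = T @^-1` C.
  by move=> k; have [C mC e] := cellT k; exists C.
(* [idx y] is the first k < n with [C k y], or n if there is none; on the
   image of T it is the cell index, as the [C k] pull back to the disjoint
   cells of [piE]. *)
set n := (ncells piE).-1.
have nE : ncells piE = n.+1 by rewrite prednK.
pose idx y := find (fun k => `[< C k y >]) (iota 0 n).
have idx_lt y : (idx y < ncells piE)%N.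
  by rewrite nE ltnS -[leqRHS](size_iota 0 n) find_size.
have midx k : measurable (idx @^-1` [set k]).
  have -> : idx @^-1` [set k] = if (k <= n)%N then
      \bigcap_(j in [set j | (j < k)%N]) ~` C j `&` (if (k < n)%N then C k else setT)
    else set0.
    apply/seteqP; split=> y; rewrite /preimage /=.
      move=> /find_iotaP[kn before hit]; rewrite kn.
      split=> [j /= jk|]; first by move/asboolP: (before j jk).
      by case: ifP => // /hit /asboolP.
    case: ifP => // kn [nC Ck]; apply/find_iotaP; split=> // [j jk|kn'].
      by apply/asboolP; exact: nC.
    by apply/asboolP; move: Ck; rewrite kn'.
  case: ifP => // _; apply: measurableI.
    by apply: bigcap_measurableType => j _; apply: measurableC; case: (CE j).
  by case: ifP => // _; case: (CE k).
exists (FinPart idx_lt midx); split=> // x; apply/find_iotaP.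
have CT j : `[< C j (T x) >] = (cell_of piE x == j).
  by apply/asboolP/eqP; case: (CE j) => _; rewrite -[C j (T x)]/((T @^-1` C j) x) => <-.
split=> [|j jx|xn]; rewrite ?CT.
- by rewrite -ltnS -nE cell_of_lt.
- by rewrite eq_sym neq_ltn jx.
- exact: eqxx.
Qed.

End factorization.

Section quantization.
Context (R : realType) (eps : R) (N : nat).
Hypothesis eps_gt0 : (0 < eps)%R.

Definition level_set k : set (\bar R) :=
  if (k < N)%N then [set z | (k%:R * eps)%:E <= z < (k.+1%:R * eps)%:E]
  else if k == N then [set z | (N%:R * eps)%:E <= z] else set0.

(* The top level is tested first: below it [z] is finite, whereas [fine +oo = 0]. *)
Definition quantize (z : \bar R) : nat :=
  if (N%:R * eps)%:E <= z then N else Num.truncn (fine z / eps).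

Lemma quantizeP z k : 0 <= z -> quantize z = k <-> level_set k z.
Proof.
rewrite /quantize /level_set => z0; case: ifPn => [Nz|].
  split=> [<-|]; first by rewrite ltnn eqxx.
  case: ltnP => [kN /andP[_ zk]|_]; last by case: eqP.
  have := le_lt_trans Nz zk; rewrite lte_fin ltr_pM2r // ltr_nat ltnS.
  by rewrite leqNgt kN.
rewrite -ltNge => zN.
have [r zE] : exists r, z = r%:E.
  by exists (fine z); rewrite fineK // ge0_fin_numE // (lt_trans zN) ?ltry.
move: z0 zN; rewrite zE => z0 zN.
have r0 : (0 <= r)%R by rewrite -lee_fin.
have rN : (r < N%:R * eps)%R by rewrite -lte_fin.
have truncE : Num.truncn (r / eps) = k <-> (k%:R * eps <= r < k.+1%:R * eps)%R.
  rewrite -ler_pdivlMr // -ltr_pdivrMr // -truncn_eq ?divr_ge0 ?(ltW eps_gt0) //.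
  by split=> [<-|/eqP //]; exact: eqxx.
rewrite /= truncE; case: ltnP => kN; first by rewrite /= lee_fin lte_fin.
split=> [/andP[kr _]|]; first by move: (le_lt_trans kr rN); rewrite ltr_pM2r // ltr_nat ltnNge kN.
by case: eqP => //= -> Nr; move: (lt_le_trans zN Nr); rewrite ltxx.
Qed.

Lemma quantize_lt z : 0 <= z -> (quantize z < N.+1)%N.
Proof.
move=> z0; have := (quantizeP (quantize z) z0).1 erefl.
by rewrite /level_set ltnS; case: ltnP => [/ltnW|_] //; case: eqP => [->|].
Qed.

Lemma measurable_level_set k : measurable (level_set k).
Proof.
rewrite /level_set; case: ifP => _.
  rewrite (_ : [set z | _ <= z < _] =
     [set` Interval (BLeft (k%:R * eps)%:E) (BLeft (k.+1%:R * eps)%:E)]).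
    exact: emeasurable_itv.
  by apply/seteqP; split => z /=; rewrite in_itv.
case: ifP => _ //; rewrite (_ : [set z | _ <= z] =
  [set` Interval (BLeft (N%:R * eps)%:E) (BInfty _ false)]).
  exact: emeasurable_itv.
by apply/seteqP; split => z /=; rewrite in_itv /= andbT.
Qed.

End quantization.

Section density.
Context d (E : measurableType d) (R : realType) (mu nu : probability E R).
Variable g : E -> \bar R.
Hypotheses (g_ge0 : forall x, 0 <= g x) (mg : measurable_fun [set: E] g)
  (nu_density : forall A, measurable A -> nu A = \int[mu]_(x in A) g x).

Lemma density_lb B (a : R) : measurable B -> (0 <= a)%R ->
  (forall x, B x -> a%:E <= g x) -> a%:E * mu B <= nu B.
Proof.
move=> mB a0 aB; rewrite nu_density // -integral_cst //.
by apply: ge0_le_integral => //; exact: measurable_funS mg.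
Qed.

Lemma density_ub B (b : R) : measurable B ->
  (forall x, B x -> g x <= b%:E) -> nu B <= b%:E * mu B.
Proof.
move=> mB gB; rewrite nu_density // -integral_cst //.
by apply: ge0_le_integral => //; exact: measurable_funS mg.
Qed.

Lemma mu_density_infty : mu (g @^-1` [set +oo]) = 0.
Proof.
set I := g @^-1` [set +oo]; have mI : measurable I := measurable_preimageT mg (emeasurable_set1 _).
set r := fine (mu I); have muIE : mu I = r%:E by rewrite fineK // fin_num_measure.
rewrite muIE; congr EFin; apply/eqP; apply: contraT => r_neq0.
have r_gt0 : (0 < r)%R by rewrite lt_neqAle eq_sym r_neq0 fine_ge0.
(* otherwise [nu] would give mass 2 to [I] *)
have : (2 / r)%:E * mu I <= nu I.
  apply: density_lb => //; first by rewrite divr_ge0 // ltW.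
  by move=> x ->; exact: leey.
rewrite muIE -EFinM divfK //.
by move=> /le_trans/(_ (probability_le1 nu mI)); rewrite lee_fin; lra.
Qed.

Lemma nu_density_infty : nu (g @^-1` [set +oo]) = 0.
Proof.
have mI : measurable (g @^-1` [set +oo]) := measurable_preimageT mg (emeasurable_set1 _).
rewrite nu_density // null_set_integral //; last exact: mu_density_infty.
exact: measurable_funS mg.
Qed.

Lemma density_tail (eps eta : R) : (0 < eps)%R -> (0 < eta)%R ->
  exists N : nat, nu (g @^-1` [set z | (N%:R * eps)%:E <= z]) < eta%:E.
Proof.
move=> eps_gt0 eta_gt0; pose G (m : nat) := g @^-1` [set z | (m%:R * eps)%:E <= z].
have mG m : measurable (G m).
  apply: measurable_preimageT mg _; rewrite (_ : [set z | _ <= z] =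
    [set` Interval (BLeft (m%:R * eps)%:E) (BInfty _ false)]).
    exact: emeasurable_itv.
  by apply/seteqP; split => z /=; rewrite in_itv /= andbT.
have capG : \bigcap_m G m = g @^-1` [set +oo].
  apply/seteqP; split => x /=; last by move=> gx m _; rewrite /G /preimage /= gx leey.
  move=> Gx; case Egx : (g x) => [r| |] //; last by move: (g_ge0 x); rewrite Egx.
  have := Gx (Num.truncn (r / eps)).+1 I; rewrite /G /= Egx lee_fin.
  by rewrite -ler_pdivlMr // leNgt truncnS_gt.
have G_nonincr : {homo G : m n / (m <= n)%N >-> (n <= m)%O}.
  move=> m n mn; apply/asboolP => x; rewrite /G /=; apply: le_trans.
  by rewrite lee_fin ler_pM2r // ler_nat.
have G0_fin : nu (G 0%N) < +oo by rewrite (le_lt_trans (probability_le1 _ _)) ?ltry.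
have cvgG : (nu \o G) m @[m --> \oo] --> nu (g @^-1` [set +oo]).
  rewrite -capG; apply: nonincreasing_cvg_mu => //.
  by rewrite capG; exact: measurable_preimageT mg (emeasurable_set1 _).
rewrite nu_density_infty in cvgG.
have [N _ GN] := cvgG _ (open_ereal_lt' (eta_gt0 : 0%:E < eta%:E)).
by exists N; exact: GN N (leqnn N).
Qed.

Lemma cell_error_le P (mP : measurable P) (c e : R) : (0 <= c)%R ->
  (forall x, P x -> c%:E <= g x <= (c + e)%:E) -> forall A, measurable A ->
  `|nu P * mcond mu mP A - nu (A `&` P)| <= e%:E * mu (A `&` P).
Proof.
move=> c0 gP A mA; have mAP := measurableI _ _ mA mP.
have bounds X : measurable X -> X `<=` P ->
    c%:E * mu X <= nu X /\ nu X <= (c + e)%:E * mu X.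
  by move=> mX XP; split; [apply: density_lb|apply: density_ub] => // x /XP /gP /andP[].
have [lbP ubP] := bounds P mP (@subset_refl _ _).
have [lbA ubA] := bounds _ mAP (@subIsetr _ _ _).
have := mcondE mu mP mA.
move: lbP ubP lbA ubA; rewrite (probability_fineE nu mP) (probability_fineE nu mAP).
rewrite (probability_fineE mu mP) (probability_fineE mu mAP).
rewrite (probability_fineE (mcond mu mP) mA) -!EFinM -EFinB abse_EFin !lee_fin.
move=> ? ? ? ? [mqx].
have m0 : (0 <= fine (mu P))%R by rewrite fine_ge0.
have q0 : (0 <= fine (mcond mu mP A))%R by rewrite fine_ge0.
rewrite ler_norml; apply/andP; split; nra.
Qed.

Section levels.
Variables (eps : R) (N : nat).
Hypothesis eps_gt0 : (0 < eps)%R.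

Lemma level_preimage k :
  (fun x => quantize eps N (g x)) @^-1` [set k] = g @^-1` level_set eps N k.
Proof. by apply/seteqP; split => x /=; move/(quantizeP N eps_gt0 _ (g_ge0 x)). Qed.

Lemma measurable_level_cell k :
  measurable ((fun x => quantize eps N (g x)) @^-1` [set k]).
Proof. by rewrite level_preimage; exact/measurable_preimageT/measurable_level_set. Qed.

Definition level_part : finpart E :=
  FinPart (fun x => quantize_lt N eps_gt0 (g_ge0 x)) measurable_level_cell.

Lemma coarse_grain_error A : measurable A ->
  `|\sum_(k < N.+1) nu (cell level_part k) *
      mcond mu (measurable_cell level_part k) A - nu A|
  <= eps%:E + nu (g @^-1` [set z | (N%:R * eps)%:E <= z]).
Proof.
move=> mA; rewrite -[nu A](measure_cells_sum level_part nu mA).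
rewrite -fin_num_sumeN; last first.
  by move=> k _; rewrite fin_num_measure //; apply: measurableI => //; exact: measurable_cell.
rewrite -big_split; apply: le_trans (lee_abs_sum _ _ _) _.
rewrite big_ord_recr; apply: leeD.
  apply: (@le_trans _ _ (\sum_(k < N) eps%:E * mu (A `&` cell level_part k))).
    apply: lee_sum => k _.
    have c0 : (0 <= k%:R * eps)%R by rewrite mulr_ge0 // ltW.
    apply: (cell_error_le _ c0) => // x /(quantizeP N eps_gt0 _ (g_ge0 x)).
    rewrite /level_set /= ltn_ord => /andP[-> gk].
    by rewrite (_ : k%:R * eps + eps = k.+1%:R * eps)%R ?ltW // -natr1 mulrDl mul1r.
  rewrite -ge0_sume_distrr // -[leRHS]mule1; apply: lee_wpmul2l; first by rewrite lee_fin ltW.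
  apply: le_trans (probability_le1 mu mA).
  rewrite -[leRHS](measure_cells_sum level_part mu mA) big_ord_recr /= leeDl //.
apply: (@le_trans _ _ (nu (cell level_part ord_max))); first exact: cell_error_le_mass.
by rewrite /cell level_preimage /level_set /= ltnn eqxx.
Qed.

End levels.

End density.

Section sufficiency.
Context d d' (E : measurableType d) (F : measurableType d') (R : realType).
Variables (mu nu : probability E R) (T : E -> F) (g : E -> \bar R).
Hypotheses (mT : measurable_fun [set: E] T) (g_ge0 : forall x, 0 <= g x)
  (g_suff : forall B : set (\bar R), measurable B ->
     exists2 C : set F, measurable C & g @^-1` B = T @^-1` C)
  (nu_density : forall A, measurable A -> nu A = \int[mu]_(x in A) g x).

Lemma sufficient_measurable : measurable_fun [set: E] g.
Proof.
move=> _ B mB; rewrite setTI; have [C mC ->] := g_suff mB.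
exact: measurable_preimageT mT mC.
Qed.

Lemma sufficient_approx (muT nuT : probability F R) :
    is_image_measure mu T muT -> is_image_measure nu T nuT ->
  forall delta : R, (0 < delta)%R ->
  exists (piF : finpart F) (Q : nat -> probability E R),
    (forall U, measurable U -> mu U = mixture piF Q muT U) /\
    (forall A, measurable A -> `|mixture piF Q nuT A - nu A| < delta%:E).
Proof.
move=> muTE nuTE delta delta_gt0.
have eps_gt0 : (0 < delta / 2)%R by rewrite divr_gt0.
have mg := sufficient_measurable.
have [N tailN] := density_tail g_ge0 mg nu_density eps_gt0 eps_gt0.
pose piE := level_part g_ge0 mg N eps_gt0.
have cellsT k : exists2 C, measurable C & cell piE k = T @^-1` C.
  by rewrite /cell /= level_preimage //; apply: g_suff; exact: measurable_level_set.
have [piF [ncE compE]] := finpart_factor (ltn0Sn N : (0 < ncells piE)%N) cellsT.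
exists piF, (fun k => mcond mu (measurable_cell piE k)); split.
  by move=> U mU; exact: mixture_mcond_image.
move=> A mA; rewrite (mixture_image ncE compE _ _ nuTE).
apply: le_lt_trans (coarse_grain_error g_ge0 mg nu_density N eps_gt0 mA) _.
by rewrite [in ltRHS](splitr delta) EFinD lteD2lE.
Qed.

End sufficiency.

Section image_measure.
Context d d' (E : measurableType d) (F : measurableType d') (R : realType).

Lemma is_comp_kernel_kdirac (T : E -> F) (mT : measurable_fun [set: E] T)
    (P : probability E R) (PT : probability F R) :
  is_image_measure P T PT -> is_comp_kernel P (kdirac mT) PT.
Proof.
move=> PTE B mB; have mTB := measurable_preimageT mT mB.
under eq_integral do rewrite /kdirac /= diracE -indicE.
by rewrite integral_indic ?setIT // PTE.
Qed.

Lemma is_image_measure_cancel (T : E -> F) (S : F -> E)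
    (mS : measurable_fun [set: F] S) (P : probability E R) (PT : probability F R) :
  cancel T S -> is_image_measure P T PT -> is_image_measure PT S P.
Proof.
move=> TK PTE B mB; rewrite PTE; last exact: measurable_preimageT mS mB.
by congr (P _); apply/seteqP; split=> x; rewrite /preimage /= TK.
Qed.

End image_measure.

Section divergence.
Context (R : realType) (alpha : divergence_fun R).
Arguments alpha : clear implicits.
Hypothesis alphaD : is_divergence alpha.

Lemma divergence_image_le d d' (E : measurableType d) (F : measurableType d')
    (mu nu : probability E R) (T : E -> F) (muT nuT : probability F R) :
  @is_polish R d E -> @is_polish R d' F -> measurable_fun [set: E] T ->
  is_image_measure mu T muT -> is_image_measure nu T nuT ->
  alpha d' F nuT muT <= alpha d E nu mu.
Proof.
move=> pE pF mT muTE nuTE; apply: alphaD.2 pE pF _ _ (kdirac mT) _ _ _ _.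
- exact: is_comp_kernel_kdirac.
- exact: is_comp_kernel_kdirac.
Qed.

Lemma divergence_le_approx d (E : measurableType d) (mu nu : probability E R)
    (b : \bar R) : @is_polish R d E -> 0 <= b ->
  (forall delta : R, (0 < delta)%R -> exists2 nu' : probability E R,
     (forall A, measurable A -> `|nu' A - nu A| < delta%:E) & alpha d E nu' mu <= b) ->
  alpha d E nu mu <= b.
Proof.
move=> pE; case: b => [b _| |] // approx; last by rewrite leey.
have [_ _ alpha_lsc _ _] := alphaD.1 d E pE mu.
rewrite leNgt; apply/negP => /alpha_lsc[delta delta_gt0 near].
have [nu' close] := approx delta delta_gt0.
by rewrite leNgt near.
Qed.

End divergence.

Unset Implicit Arguments.
Local Close Scope ring_scope.

Theorem proposition4p3 (R : realType) (alpha : divergence_fun R)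
  (d d' : measure_display) (E : measurableType d) (F : measurableType d')
  (mu nu : probability E R) (T : E -> F) (muT nuT : probability F R) :
  is_divergence alpha ->
  @is_polish R d E -> @is_polish R d' F ->
  nu `<< mu ->
  measurable_fun [set: E] T ->
  is_image_measure mu T muT -> is_image_measure nu T nuT ->
  (sufficient T mu nu -> alpha d' F nuT muT = alpha d E nu mu) /\
  ((exists S : F -> E, [/\ measurable_fun [set: F] S, cancel T S & cancel S T]) ->
     alpha d' F nuT muT = alpha d E nu mu).
Proof.
move=> alphaD pE pF _ mT muTE nuTE.
have alphaT_le := divergence_image_le alphaD pE pF mT muTE nuTE.
split=> [[g [g_ge0 g_suff nu_density]]|[S [mS TK _]]]; apply/le_anti; rewrite alphaT_le /=.
- have [alphaT_ge0 _ _ _ _] := alphaD.1 d' F pF muT.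
  apply: (divergence_le_approx alphaD pE (alphaT_ge0 nuT)) => delta delta_gt0.
  have [piF [Q [muE close]]] :=
    sufficient_approx mT g_ge0 g_suff nu_density muTE nuTE delta_gt0.
  exists (mixture piF Q nuT) => //.
  apply: alphaD.2 pF pE _ _ (step_kernel piF Q) _ _ _ (is_comp_kernel_step _ _ _).
  by move=> B mB; rewrite muE // is_comp_kernel_step.
- apply: (divergence_image_le alphaD pF pE mS);
    exact: is_image_measure_cancel TK _.
Qed.
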